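(* Let $K$ be a field of characteristic $0$, let $L=\mathcal{L}(x,y)$ be the free Lie algebra over $K$ freely generated by $x,y$, let $\delta$ be the derivation of $L$ with $\delta(x)=0$, $\delta(y)=x$, and $L^\delta=\ker\delta$. Let $f\neq 0$ be a multihomogeneous element of $L$ with $\deg_y(f)=3$ and $\deg(f)=n$. Then $f\in L^\delta$ if and only if $f$ belongs to the Lie subalgebra of $L$ generated by $x$, $[y,x]$ and the elements $$[y, \underbrace{x, \ldots, x}_k, [y, \underbrace{x, \ldots, x}_{n-3-k}, y]] - [y,\underbrace{x, \ldots, x}_{k-1}, y, [y, \underbrace{x, \ldots, x}_{n-2-k}]]$$ for integers $k$ with $\frac{n-2}{2}\leq k\leq n-4$.
   Context: Brackets are left-normed: $[a_1,a_2,\ldots,a_n]=[[\ldots[a_1,a_2],\ldots],a_n]$, and an inner bracket denotes a left-normed element inserted as a single argument. *)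

(* The free Lie algebra L(x,y) over K is modelled as the Lie
   subalgebra generated by x and y inside the (noncommutative) formal power
   series algebra K<<x,y>>, i.e. the Lie polynomials (Lie subalgebra of
   K<x,y> generated by x, y), which is the standard model of the free Lie
   algebra.  Words are [seq bool], with false = x and true = y. *)
From HB Require Import structures.
From mathcomp Require Import all_boot all_order all_algebra.
Set Implicit Arguments. Unset Strict Implicit. Unset Printing Implicit Defensive.
Import Order.TTheory GRing.Theory Num.Theory.
Local Open Scope ring_scope.

Section FreeLie.
Variable K : fieldType.

Definition ser := seq bool -> K.

Definition sx : ser := fun w => if w == [:: false] then 1 else 0.
Definition sy : ser := fun w => if w == [:: true] then 1 else 0.
Definition szero : ser := fun _ => 0.
Definition sadd (f g : ser) : ser := fun w => f w + g w.
Definition ssub (f g : ser) : ser := fun w => f w - g w.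
Definition sscale (a : K) (f : ser) : ser := fun w => a * f w.
Definition smul (f g : ser) : ser :=
  fun w => \sum_(i < (size w).+1) f (take i w) * g (drop i w).
Definition sbr (f g : ser) : ser := ssub (smul f g) (smul g f).

(* left-normed bracket [a_1, a_2, ..., a_n] = [[...[a_1,a_2],...],a_n] *)
Definition lbr (a : ser) (s : seq ser) : ser := foldl sbr a s.

Inductive lie_gen (S : ser -> Prop) : ser -> Prop :=
| lie_gen_base f : S f -> lie_gen S f
| lie_gen_add f g : lie_gen S f -> lie_gen S g -> lie_gen S (sadd f g)
| lie_gen_scale a f : lie_gen S f -> lie_gen S (sscale a f)
| lie_gen_br f g : lie_gen S f -> lie_gen S g -> lie_gen S (sbr f g).

Definition in_L (f : ser) : Prop := lie_gen (fun g => g = sx \/ g = sy) f.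

(* the derivation delta with delta(x) = 0, delta(y) = x, extended to K<<x,y>>:
   the coefficient of w in delta f is the sum, over positions of w carrying x,
   of the coefficient in f of the word obtained by replacing that x by y *)
Definition sdelta (f : ser) : ser :=
  fun w => \sum_(i < size w | nth true w i == false) f (set_nth false w i true).

Definition multihom (f : ser) (dx dy : nat) : Prop :=
  forall w, f w != 0 -> count negb w = dx /\ count id w = dy.

Definition gen_elt (n k : nat) : ser :=
  ssub (lbr sy (nseq k sx ++ [:: lbr sy (nseq (n - 3 - k) sx ++ [:: sy])]))
       (lbr sy (nseq (k - 1) sx ++ [:: sy; lbr sy (nseq (n - 2 - k) sx)])).

Definition cor_gens (n : nat) (g : ser) : Prop :=
  g = sx \/ g = sbr sy sx \/
  exists k : nat, [/\ (n - 2 <= 2 * k)%N, (k <= n - 4)%N & g = gen_elt n k].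

End FreeLie.

(* Write Y p = [y, x, ..., x] with p letters x.  A Lie element of multidegree (m, 3)
   lies in the span of the brackets [[Y a, Y b], Y c] with a + b + c = m, and by
   antisymmetry and the Jacobi identity each such bracket with a zero index is a
   combination of T b = [[Y b, Y 0], Y (m - b)] (0 < b < m) and Q = [[Y 0, Y m], Y 0].
   Since delta (Y 0) = x and delta (Y p) = 0 for p > 0, delta kills the brackets with
   positive indices and maps sum_b beta_b T b + gamma Q into the span of the products
   Y p * Y (m + 1 - p), which are linearly independent.  Comparing coefficients, delta f = 0
   forces 2 gamma = 0, beta_(m-1) = 0 and beta_b = beta_(m-1-b), so the T-part is a
   combination of the sums T b + T (m - 1 - b), each of which is minus a generator of
   the corollary.  Conversely delta kills x, [y, x] and every generator, because
   delta (T b) = [Y (b + 1), Y (m - b)] and the two T's of a generator cancel. *)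

From mathcomp Require Import all_boot all_order all_algebra.
From Stdlib Require Import FunctionalExtensionality.
From mathcomp Require Import ring zify.
Set Implicit Arguments. Unset Strict Implicit. Unset Printing Implicit Defensive.
Import GRing.Theory.
Local Open Scope ring_scope.

Section FreeLieDerivation.
Variable K : fieldType.
Local Notation ser := (ser K).
Local Notation X := (sx K).
Local Notation Z := (szero K).
Implicit Types (f g h : ser) (l : bool) (w : seq bool).

Definition lquo l f : ser := fun u => f (l :: u).

Lemma smul_nil f g : smul f g [::] = f [::] * g [::].
Proof. by rewrite /smul big_ord_recl big_ord0 addr0. Qed.

Lemma smul_cons f g l w :
  smul f g (l :: w) = f [::] * g (l :: w) + smul (lquo l f) g w.
Proof. by rewrite /smul /= big_ord_recl. Qed.

Lemma smulDl f1 f2 g : smul (sadd f1 f2) g = sadd (smul f1 g) (smul f2 g).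
Proof.
apply: functional_extensionality => w; rewrite /smul /sadd -big_split.
by apply: eq_bigr => i _; rewrite mulrDl.
Qed.

Lemma smulDr f g1 g2 : smul f (sadd g1 g2) = sadd (smul f g1) (smul f g2).
Proof.
apply: functional_extensionality => w; rewrite /smul /sadd -big_split.
by apply: eq_bigr => i _; rewrite mulrDr.
Qed.

Lemma smulBl f1 f2 g : smul (ssub f1 f2) g = ssub (smul f1 g) (smul f2 g).
Proof.
apply: functional_extensionality => w; rewrite /smul /ssub -sumrB.
by apply: eq_bigr => i _; rewrite mulrBl.
Qed.

Lemma smulBr f g1 g2 : smul f (ssub g1 g2) = ssub (smul f g1) (smul f g2).
Proof.
apply: functional_extensionality => w; rewrite /smul /ssub -sumrB.
by apply: eq_bigr => i _; rewrite mulrBr.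
Qed.

Lemma smulZl c f g : smul (sscale c f) g = sscale c (smul f g).
Proof.
apply: functional_extensionality => w; rewrite /smul /sscale mulr_sumr.
by apply: eq_bigr => i _; rewrite mulrA.
Qed.

Lemma smulZr c f g : smul f (sscale c g) = sscale c (smul f g).
Proof.
apply: functional_extensionality => w; rewrite /smul /sscale mulr_sumr.
by apply: eq_bigr => i _; rewrite mulrCA.
Qed.

Lemma smul0l g : smul Z g = Z.
Proof.
by apply: functional_extensionality => w; rewrite /smul big1 // => i _; rewrite mul0r.
Qed.

Lemma smul0r f : smul f Z = Z.
Proof.
by apply: functional_extensionality => w; rewrite /smul big1 // => i _; rewrite mulr0.
Qed.

Lemma lquo_smul l f g :
  lquo l (smul f g) = sadd (sscale (f [::]) (lquo l g)) (smul (lquo l f) g).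
Proof. by apply: functional_extensionality => w; rewrite /lquo smul_cons. Qed.

Lemma smulA f g h : smul (smul f g) h = smul f (smul g h).
Proof.
apply: functional_extensionality => w; elim: w f => [|l w IH] f.
  by rewrite !smul_nil mulrA.
rewrite !smul_cons smul_nil lquo_smul smulDl smulZl /sadd /sscale IH.
by rewrite mulrDr !mulrA addrA.
Qed.

Definition ssum (r : seq nat) (F : nat -> ser) : ser := fun w => \sum_(i <- r) F i w.

Lemma sbr_jacobi f g h :
  sbr (sbr f g) h = sadd (sbr (sbr f h) g) (sbr f (sbr g h)).
Proof.
rewrite /sbr !smulBl !smulBr !smulA.
by apply: functional_extensionality => w; rewrite /sadd /ssub; ring.
Qed.

Lemma sbr_skew f g : sbr f g = sscale (-1) (sbr g f).
Proof. by apply: functional_extensionality => w; rewrite /sscale /sbr /ssub; ring. Qed.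

Lemma sbrss f : sbr f f = Z.
Proof. by apply: functional_extensionality => w; rewrite /sbr /ssub subrr. Qed.

Lemma sbrDl f1 f2 g : sbr (sadd f1 f2) g = sadd (sbr f1 g) (sbr f2 g).
Proof.
rewrite /sbr smulDl smulDr.
by apply: functional_extensionality => w; rewrite /sadd /ssub; ring.
Qed.

Lemma sbrDr f g1 g2 : sbr f (sadd g1 g2) = sadd (sbr f g1) (sbr f g2).
Proof.
rewrite /sbr smulDl smulDr.
by apply: functional_extensionality => w; rewrite /sadd /ssub; ring.
Qed.

Lemma sbrZl c f g : sbr (sscale c f) g = sscale c (sbr f g).
Proof.
rewrite /sbr smulZl smulZr.
by apply: functional_extensionality => w; rewrite /sscale /ssub; ring.
Qed.

Lemma sbrZr c f g : sbr f (sscale c g) = sscale c (sbr f g).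
Proof.
rewrite /sbr smulZl smulZr.
by apply: functional_extensionality => w; rewrite /sscale /ssub; ring.
Qed.

Lemma sbr0l g : sbr Z g = Z.
Proof.
by rewrite /sbr smul0l smul0r; apply: functional_extensionality => w; rewrite /ssub subrr.
Qed.

Lemma sbr0r f : sbr f Z = Z.
Proof.
by rewrite /sbr smul0l smul0r; apply: functional_extensionality => w; rewrite /ssub subrr.
Qed.

Lemma sadd0r f : sadd f Z = f.
Proof. by apply: functional_extensionality => w; rewrite /sadd addr0. Qed.

Lemma sadd0l f : sadd Z f = f.
Proof. by apply: functional_extensionality => w; rewrite /sadd add0r. Qed.

Lemma sscale0 f : sscale 0 f = Z.
Proof. by apply: functional_extensionality => w; rewrite /sscale mul0r. Qed.

Lemma sscaler0 c : sscale c Z = Z.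
Proof. by apply: functional_extensionality => w; rewrite /sscale mulr0. Qed.

Lemma sdelta_nil f : sdelta f [::] = 0.
Proof. by rewrite /sdelta big_ord0. Qed.

Lemma sdelta_cons f l w :
  sdelta f (l :: w) = (if l then 0 else f (true :: w)) + sdelta (lquo l f) w.
Proof.
by rewrite /sdelta big_mkcond big_ord_recl [in RHS]big_mkcond; case: l.
Qed.

Lemma lquo_sdelta l f :
  lquo l (sdelta f) = sadd (sscale (~~ l)%:R (lquo true f)) (sdelta (lquo l f)).
Proof.
apply: functional_extensionality => w.
by rewrite /lquo /sadd /sscale sdelta_cons; case: l; rewrite /= ?mul0r ?mul1r.
Qed.

Lemma sdeltaD f g : sdelta (sadd f g) = sadd (sdelta f) (sdelta g).
Proof. by apply: functional_extensionality => w; rewrite /sdelta /sadd big_split. Qed.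

Lemma sdeltaZ c f : sdelta (sscale c f) = sscale c (sdelta f).
Proof. by apply: functional_extensionality => w; rewrite /sdelta /sscale mulr_sumr. Qed.

Lemma sdelta0 : sdelta Z = Z.
Proof. by apply: functional_extensionality => w; rewrite /sdelta big1. Qed.

Lemma sdelta_ssum r F : sdelta (ssum r F) = ssum r (fun i => sdelta (F i)).
Proof. by apply: functional_extensionality => w; rewrite /sdelta /ssum exchange_big. Qed.

Lemma sdelta_smul f g :
  sdelta (smul f g) = sadd (smul (sdelta f) g) (smul f (sdelta g)).
Proof.
apply: functional_extensionality => w; rewrite /sadd.
elim: w f g => [|l w IH] f g.
  by rewrite sdelta_nil !smul_nil !sdelta_nil mul0r mulr0 addr0.
rewrite sdelta_cons !smul_cons !sdelta_nil mul0r add0r sdelta_cons.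
rewrite lquo_smul sdeltaD sdeltaZ /sadd /sscale IH.
rewrite lquo_sdelta smulDl smulZl /sadd /sscale.
by case: l; rewrite /= ?smul_cons; ring.
Qed.

Lemma sdelta_sbr f g :
  sdelta (sbr f g) = sadd (sbr (sdelta f) g) (sbr f (sdelta g)).
Proof.
have sdeltaB f1 f2 : sdelta (ssub f1 f2) = ssub (sdelta f1) (sdelta f2).
  by apply: functional_extensionality => w; rewrite /sdelta /ssub sumrB.
rewrite /sbr sdeltaB !sdelta_smul.
by apply: functional_extensionality => w; rewrite /sadd /ssub; ring.
Qed.

Lemma sdelta_sx : sdelta X = Z.
Proof.
apply: functional_extensionality => w; rewrite /sdelta big1 // => i _.
rewrite /sx; case: eqP => // e.
have := congr1 (nth false ^~ i) e; rewrite nth_set_nth /= eqxx.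
by case: (nat_of_ord i) => [|[]].
Qed.

Lemma sdelta_sy : sdelta (sy K) = X.
Proof.
apply: functional_extensionality => w; rewrite /sdelta /sx /sy.
case: w => [|l [|l' w]].
- by rewrite big_ord0.
- by rewrite big_mkcond big_ord_recl big_ord0; case: l; rewrite /= ?addr0.
- rewrite (_ : (_ == _) = false); last by case: l.
  apply: big1 => i _; case: eqP => // /(congr1 size).
  by rewrite size_set_nth /= maxnE; lia.
Qed.

Definition Y (p : nat) : ser := lbr (sy K) (nseq p X).

Lemma YS p : Y p.+1 = sbr (Y p) X.
Proof.
rewrite /Y; have -> : nseq p.+1 X = rcons (nseq p X) X by elim: p => //= p ->.
by rewrite /lbr foldl_rcons.
Qed.

Lemma sdelta_Y0 : sdelta (Y 0) = X.
Proof. exact: sdelta_sy. Qed.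

Lemma sdelta_Y p : (0 < p)%N -> sdelta (Y p) = Z.
Proof.
case: p => // p _; elim: p => [|p IH]; rewrite YS sdelta_sbr sdelta_sx sbr0r sadd0r.
  by rewrite sdelta_Y0 sbrss.
by rewrite IH sbr0l.
Qed.

Lemma multihom_eq0 f p q w :
  multihom f p q -> (count negb w != p) || (count id w != q) -> f w = 0.
Proof. by move=> hf; apply: contraTeq => /hf [-> ->]; rewrite !eqxx. Qed.

Lemma multihom_smul f g p1 q1 p2 q2 : multihom f p1 q1 -> multihom g p2 q2 ->
  multihom (smul f g) (p1 + p2)%N (q1 + q2)%N.
Proof.
move=> hf hg w nz.
have /existsP [i] : [exists i : 'I_(size w).+1, f (take i w) * g (drop i w) != 0].
  apply: contraNT nz => /existsPn h.
  by rewrite /smul big1 // => i _; apply/eqP/negPn/h.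
rewrite mulf_eq0 negb_or => /andP [/hf [px qx] /hg [py qy]].
by rewrite -(cat_take_drop i w) !count_cat px qx py qy.
Qed.

Lemma multihom_sbr f g p1 q1 p2 q2 : multihom f p1 q1 -> multihom g p2 q2 ->
  multihom (sbr f g) (p1 + p2)%N (q1 + q2)%N.
Proof.
move=> hf hg w; rewrite /sbr /ssub.
have [-> | nz _] := eqVneq (smul f g w) 0; last exact: multihom_smul hf hg _ nz.
rewrite sub0r oppr_eq0 addnC [(q1 + _)%N]addnC.
exact: multihom_smul hg hf w.
Qed.

Lemma multihom_sx : multihom X 1 0.
Proof. by move=> w; rewrite /sx; case: (w =P [:: false]) => [-> | ]; rewrite ?eqxx. Qed.

Lemma multihom_sy : multihom (sy K) 0 1.
Proof. by move=> w; rewrite /sy; case: (w =P [:: true]) => [-> | ]; rewrite ?eqxx. Qed.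

Lemma multihom_Y p : multihom (Y p) p 1.
Proof.
elim: p => [|p IH]; first exact: multihom_sy.
by rewrite YS -addn1 -[1%N]addn0; apply: multihom_sbr IH multihom_sx.
Qed.

Definition deg_part (P : pred bool) (d : nat) f : ser :=
  fun w => if count P w == d then f w else 0.

Local Notation xpart := (deg_part negb).
Local Notation ypart := (deg_part id).

Lemma deg_partD P d f g : deg_part P d (sadd f g) = sadd (deg_part P d f) (deg_part P d g).
Proof.
by apply: functional_extensionality => w; rewrite /deg_part /sadd; case: ifP; rewrite ?addr0.
Qed.

Lemma deg_partZ P d c f : deg_part P d (sscale c f) = sscale c (deg_part P d f).
Proof.
by apply: functional_extensionality => w; rewrite /deg_part /sscale; case: ifP; rewrite ?mulr0.
Qed.

Lemma deg_part0 P d : deg_part P d Z = Z.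
Proof. by apply: functional_extensionality => w; rewrite /deg_part; case: ifP. Qed.

Lemma xpart_hom f p q d : multihom f p q -> xpart d f = if p == d then f else Z.
Proof.
move=> hf; apply: functional_extensionality => w; rewrite /deg_part /szero.
case: (count negb w =P d) => e; case: (p =P d) => e' //;
  rewrite (multihom_eq0 (w := w) hf) //; apply/orP; left; apply/eqP; lia.
Qed.

Lemma ypart_hom f p q d : multihom f p q -> ypart d f = if q == d then f else Z.
Proof.
move=> hf; apply: functional_extensionality => w; rewrite /deg_part /szero.
case: (count id w =P d) => e; case: (q =P d) => e' //;
  rewrite (multihom_eq0 (w := w) hf) //; apply/orP; right; apply/eqP; lia.
Qed.

Lemma deg_part_smul P d g h : deg_part P d (smul g h) =
  ssum (index_iota 0 d.+1) (fun i => smul (deg_part P i g) (deg_part P (d - i) h)).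
Proof.
apply: functional_extensionality => w; rewrite /ssum /deg_part /smul exchange_big /=.
have -> : (if count P w == d then \sum_(j < (size w).+1) g (take j w) * h (drop j w)
           else 0) =
          \sum_(j < (size w).+1) if count P w == d then g (take j w) * h (drop j w) else 0.
  by case: ifP => // _; rewrite big1.
apply: eq_bigr => j _.
rewrite (_ : count P w = count P (take j w) + count P (drop j w))%N;
  last by rewrite -count_cat cat_take_drop.
set c1 := count P (take j w); set c2 := count P (drop j w).
transitivity (\sum_(0 <= i < d.+1 | i == c1)
                (if (c1 + c2 == d)%N then g (take j w) * h (drop j w) else 0)).
  by rewrite big_nat1_eq /=; case: ltnP => // hc; case: eqP => //; lia.
rewrite big_mkcond; apply: eq_big_nat => i /andP [_ hi] /=.
rewrite [c1 == i]eq_sym; case: (i =P c1) => [<- | _]; last by rewrite mul0r.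
by case: (c2 =P (d - i)%N) => e; case: eqP => e'; rewrite ?mulr1 ?mulr0 //; lia.
Qed.

Lemma deg_part_sbr P d g h : deg_part P d (sbr g h) =
  ssum (index_iota 0 d.+1) (fun i => sbr (deg_part P i g) (deg_part P (d - i) h)).
Proof.
have -> : deg_part P d (sbr g h) = ssub (deg_part P d (smul g h)) (deg_part P d (smul h g)).
  apply: functional_extensionality => w.
  by rewrite /deg_part /sbr /ssub; case: ifP; rewrite ?subr0.
rewrite !deg_part_smul; apply: functional_extensionality => w.
rewrite /ssub /ssum /sbr /ssub sumrB; congr (_ - _).
rewrite big_nat_rev /=; apply: eq_big_nat => i /andP [_ hi].
by rewrite add0n subSS (_ : d - (d - i) = i)%N //; lia.
Qed.

(** * Linear spans and the Lie elements of y-degree at most 3 *)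

Inductive span (S : ser -> Prop) : ser -> Prop :=
| span0 : span S Z
| span_gen f : S f -> span S f
| spanD f g : span S f -> span S g -> span S (sadd f g)
| spanZ c f : span S f -> span S (sscale c f).

Lemma ssum_closed (P : ser -> Prop) r F :
  P Z -> (forall f g, P f -> P g -> P (sadd f g)) ->
  (forall i, i \in r -> P (F i)) -> P (ssum r F).
Proof.
move=> P0 PD; elim: r => [|i r IH] PF.
  rewrite (_ : ssum _ F = Z) //.
  by apply: functional_extensionality => w; rewrite /ssum big_nil.
rewrite (_ : ssum _ F = sadd (F i) (ssum r F)); last first.
  by apply: functional_extensionality => w; rewrite /ssum /sadd big_cons.
apply: PD; first by apply: PF; rewrite mem_head.
by apply: IH => j hj; apply: PF; rewrite inE hj orbT.
Qed.

Lemma span_sbr (S1 S2 S : ser -> Prop) f g :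
  (forall f1 g1, S1 f1 -> S2 g1 -> span S (sbr f1 g1)) ->
  span S1 f -> span S2 g -> span S (sbr f g).
Proof.
move=> hS hf hg; elim: hf => [|f1 hf1|f1 f2 _ h1 _ h2|c f1 _ h1].
- by rewrite sbr0l; apply: span0.
- elim: hg => [|g1 hg1|g1 g2 _ h1 _ h2|c g1 _ h1].
  + by rewrite sbr0r; apply: span0.
  + exact: hS.
  + by rewrite sbrDr; apply: spanD.
  + by rewrite sbrZr; apply: spanZ.
- by rewrite sbrDl; apply: spanD.
- by rewrite sbrZl; apply: spanZ.
Qed.

Lemma span_sdelta S u : (forall f, S f -> sdelta f = Z) -> span S u -> sdelta u = Z.
Proof.
move=> hS; elim=> [|f /hS //|f g _ hf _ hg|c f _ hf]; first exact: sdelta0.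
  by rewrite sdeltaD hf hg sadd0r.
by rewrite sdeltaZ hf sscaler0.
Qed.

Lemma lie_gen_sdelta S g : (forall f, S f -> sdelta f = Z) -> lie_gen S g -> sdelta g = Z.
Proof.
move=> hS; elim=> [f /hS //|f1 f2 _ h1 _ h2|c f _ h|f1 f2 _ h1 _ h2].
- by rewrite sdeltaD h1 h2 sadd0r.
- by rewrite sdeltaZ h sscaler0.
- by rewrite sdelta_sbr h1 h2 sbr0l sbr0r sadd0r.
Qed.

Lemma lie_gen0 S g : S g -> lie_gen S Z.
Proof. by move=> hg; rewrite -(sscale0 g); apply/lie_gen_scale/lie_gen_base. Qed.

Lemma span_lie_gen S T u : lie_gen T Z -> (forall f, S f -> lie_gen T f) ->
  span S u -> lie_gen T u.
Proof.
move=> T0 hS; elim=> [|f /hS //|f g _ hf _ hg|c f _ hf] //.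
  exact: lie_gen_add.
exact: lie_gen_scale.
Qed.

Definition Y3 (a b c : nat) : ser := sbr (sbr (Y a) (Y b)) (Y c).

Definition ydeg_gens (q : nat) (g : ser) : Prop :=
  match q with
  | 0 => g = X
  | 1 => exists a, g = Y a
  | 2 => exists a b, g = sbr (Y a) (Y b)
  | 3 => exists a b c, g = Y3 a b c
  | _ => False
  end.

Lemma sbrYY_X a b : sbr (sbr (Y a) (Y b)) X = sadd (sbr (Y a.+1) (Y b)) (sbr (Y a) (Y b.+1)).
Proof. by rewrite sbr_jacobi -!YS. Qed.

Lemma ydeg_gens_sbrX q g : ydeg_gens q g -> span (ydeg_gens q) (sbr g X).
Proof.
case: q => [|[|[|[|q]]]] //=.
- by move=> ->; rewrite sbrss; apply: span0.
- by move=> [a ->]; rewrite -YS; apply: span_gen; exists a.+1.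
- by move=> [a [b ->]]; rewrite sbrYY_X; apply: spanD; apply: span_gen; do 2 eexists.
- move=> [a [b [c ->]]]; rewrite /Y3 sbr_jacobi sbrYY_X sbrDl -YS.
  by apply: spanD; [apply: spanD|]; apply: span_gen; do 3 eexists.
Qed.

Lemma ydeg_gens_sbr q1 q2 f g : (q1 + q2 <= 3)%N ->
  ydeg_gens q1 f -> ydeg_gens q2 g -> span (ydeg_gens (q1 + q2)%N) (sbr f g).
Proof.
case: q2 => [|q2] hq hf.
  by move=> /= ->; rewrite addn0; apply: ydeg_gens_sbrX.
case: q1 hq hf => [|q1] hq.
  by move=> /= -> hg; rewrite sbr_skew; apply: spanZ; apply: ydeg_gens_sbrX.
case: q1 q2 hq => [|[|q1]] [|[|q2]] hq //=; try by exfalso; lia.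
- by move=> [a ->] [b ->]; apply: span_gen; do 2 eexists.
- move=> [a ->] [b [c ->]]; rewrite sbr_skew; apply: spanZ.
  by apply: span_gen; do 3 eexists.
- by move=> [a [b ->]] [c ->]; apply: span_gen; do 3 eexists.
Qed.

Lemma span_ypart g : in_L g -> forall q, (q <= 3)%N -> span (ydeg_gens q) (ypart q g).
Proof.
elim=> [f [-> | ->] | f1 f2 _ IHf _ IHg | c f _ IHf | f1 f2 _ IHf _ IHg] q hq.
- rewrite (ypart_hom q multihom_sx); case: eqP => [<- | _]; last exact: span0.
  exact: span_gen.
- rewrite (ypart_hom q multihom_sy); case: eqP => [<- | _]; last exact: span0.
  by apply: span_gen; exists 0%N.
- by rewrite deg_partD; apply: spanD; [apply: IHf | apply: IHg].
- by rewrite deg_partZ; apply: spanZ; apply: IHf.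
- rewrite deg_part_sbr; apply: ssum_closed => [|h1 h2|i]; first exact: span0.
    exact: spanD.
  rewrite mem_index_iota => /andP [_ hi].
  rewrite -{1}(subnKC (_ : i <= q)%N); last by lia.
  apply: span_sbr (IHf _ _) (IHg _ _); try lia.
  by move=> h1 h2; apply: ydeg_gens_sbr; lia.
Qed.
(** * Linear independence of the products [Y p * Y (N - p)] *)

Lemma sum_nat_kron (F : nat -> K) (P : pred nat) a c k :
  (forall i, (a <= i < c)%N -> P i = (i == k)) ->
  \sum_(a <= i < c) (P i)%:R * F i = if (a <= k < c)%N then F k else 0.
Proof.
move=> hP; transitivity (\sum_(a <= i < c | i == k) F i); last exact: big_nat1_eq.
rewrite [RHS]big_mkcond; apply: eq_big_nat => i hi.
by rewrite hP //; case: eqP; rewrite ?mul1r ?mul0r.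
Qed.

Lemma Y_nil p : Y p [::] = 0.
Proof. by apply: (multihom_eq0 (@multihom_Y p)); rewrite orbT. Qed.

Lemma Y_yy p t v : Y p (true :: nseq t false ++ true :: v) = 0.
Proof.
apply: (multihom_eq0 (@multihom_Y p)); apply/orP; right.
by rewrite /= count_cat /= count_nseq /=; lia.
Qed.

Lemma smul_sx_rcons f w l : smul f X (rcons w l) = if l then 0 else f w.
Proof.
elim: w f => [|l' w IH] f /=; rewrite smul_cons.
  by rewrite smul_nil /sx /lquo; case: l; rewrite /= ?mulr0 ?mulr1 ?addr0.
have -> : X (l' :: rcons w l) = 0 by rewrite /sx; case: w {IH} => [|? ?]; case: l'.
by rewrite mulr0 add0r IH.
Qed.

Lemma smul_sx_y g w : smul X g (true :: w) = 0.
Proof.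
rewrite smul_cons /sx /= mul0r add0r.
by rewrite /smul big1 // => i _; rewrite /lquo /sx /= mul0r.
Qed.

Lemma Y_yxs p t : Y p (true :: nseq t false) = (t == p)%:R.
Proof.
elim: p t => [|p IH] t; first by rewrite /Y /= /sy; case: t.
rewrite YS /sbr /ssub smul_sx_y subr0.
case: t => [|t]; first by rewrite -[[:: true]]/(rcons [::] true) smul_sx_rcons.
have -> : nseq t.+1 false = rcons (nseq t false) false by elim: t => //= t ->.
by rewrite -rcons_cons smul_sx_rcons IH.
Qed.

Lemma smul_xs_y H g (e : nat -> K) i v :
  (forall t, H (nseq t false) = e t) ->
  (forall t v', H (nseq t false ++ true :: v') = 0) ->
  smul H g (nseq i false ++ true :: v) =
  \sum_(0 <= t < i.+1) e t * g (nseq (i - t) false ++ true :: v).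
Proof.
elim: i H e => [|i IH] H e He Hy.
  rewrite big_nat1 /= smul_cons -(He 0%N).
  by rewrite /smul big1 ?addr0 // => j _; rewrite /lquo (Hy 0%N) mul0r.
rewrite /= smul_cons (IH (lquo false H) (fun t => e t.+1)) //.
- by rewrite [RHS]big_nat_recl // -(He 0%N).
- by move=> t; rewrite /lquo -He.
- by move=> t v'; rewrite /lquo -(Hy t.+1 v').
Qed.

Lemma smul_Y_yxy p g i v :
  smul (Y p) g (true :: nseq i false ++ true :: v) =
  if (p <= i)%N then g (nseq (i - p) false ++ true :: v) else 0.
Proof.
rewrite smul_cons Y_nil mul0r add0r.
rewrite (@smul_xs_y _ g (fun t => (t == p)%:R)) => [|t|t v']; last 2 first.
- by rewrite /lquo Y_yxs.
- by rewrite /lquo Y_yy.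
by rewrite (@sum_nat_kron _ _ _ _ p) // ltnS.
Qed.

Lemma Yprod_free N (c : nat -> K) :
  (forall w, \sum_(0 <= p < N.+1) c p * smul (Y p) (Y (N - p)) w = 0) ->
  forall p, (p <= N)%N -> c p = 0.
Proof.
move=> h p; elim/ltn_ind: p => p IH hp.
(* At the word y x^p y x^(N-p) the system is unitriangular. *)
have := h (true :: nseq p false ++ true :: nseq (N - p) false).
rewrite (bigD1_seq p) ?mem_index_iota ?iota_uniq //= big1_seq => [|j].
  by rewrite addr0 smul_Y_yxy leqnn subnn Y_yxs eqxx mulr1.
rewrite mem_index_iota => /andP [/= hjp hj]; rewrite smul_Y_yxy.
case: leqP => [hjp' | _]; last by rewrite mulr0.
by rewrite IH ?mul0r //; case: ltngtP hjp hjp'.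
Qed.

(** * Normal form of the Lie elements of bidegree (m, 3) *)

Definition triple_xdeg (m : nat) (g : ser) : Prop :=
  exists a b c, (a + b + c = m)%N /\ g = Y3 a b c.

Lemma multihom_Y3 a b c : multihom (Y3 a b c) (a + b + c)%N 3.
Proof.
exact: multihom_sbr (multihom_sbr (@multihom_Y a) (@multihom_Y b)) (@multihom_Y c).
Qed.

Lemma span_xpart m g : span (ydeg_gens 3) g -> span (triple_xdeg m) (xpart m g).
Proof.
elim=> [|f [a [b [c ->]]]|f1 f2 _ h1 _ h2|c f _ h].
- by rewrite deg_part0; apply: span0.
- rewrite (xpart_hom m (@multihom_Y3 a b c)); case: eqP => [e|_]; last exact: span0.
  by apply: span_gen; exists a, b, c.
- by rewrite deg_partD; apply: spanD.
- by rewrite deg_partZ; apply: spanZ.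
Qed.

Lemma span_bideg_in_L m f : in_L f -> multihom f m 3 -> span (triple_xdeg m) f.
Proof.
move=> f_in_L f_hom.
have -> : f = xpart m (ypart 3 f).
  by rewrite (ypart_hom 3 f_hom) eqxx (xpart_hom m f_hom) eqxx.
exact/span_xpart/span_ypart.
Qed.

Section NormalForm.
Variable m : nat.

Definition T (b : nat) : ser := Y3 b 0 (m - b).
Definition Q : ser := Y3 0 m 0.
Definition TQsum (beta : nat -> K) (gamma : K) : ser :=
  sadd (ssum (index_iota 1 m) (fun b => sscale (beta b) (T b))) (sscale gamma Q).

Definition pos_triple (g : ser) : Prop := exists a b c,
  [/\ (a + b + c = m)%N, (0 < a)%N, (0 < b)%N, (0 < c)%N & g = Y3 a b c].

Definition normal_form (g : ser) : Prop :=
  exists u beta gamma, span pos_triple u /\ g = sadd u (TQsum beta gamma).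

Lemma TQsumD beta1 gamma1 beta2 gamma2 :
  sadd (TQsum beta1 gamma1) (TQsum beta2 gamma2) =
  TQsum (fun b => beta1 b + beta2 b) (gamma1 + gamma2).
Proof.
apply: functional_extensionality => w; rewrite /TQsum /ssum /sadd /sscale.
under [in RHS]eq_bigr do rewrite mulrDl.
by rewrite big_split /=; ring.
Qed.

Lemma TQsumZ c beta gamma :
  sscale c (TQsum beta gamma) = TQsum (fun b => c * beta b) (c * gamma).
Proof.
apply: functional_extensionality => w; rewrite /TQsum /ssum /sadd /sscale mulrDr mulr_sumr.
by under [in RHS]eq_bigr do rewrite -mulrA; rewrite mulrA.
Qed.

Lemma TQsum0 : TQsum (fun=> 0) 0 = Z.
Proof.
apply: functional_extensionality => w; rewrite /TQsum /ssum /sadd /sscale mul0r addr0.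
by rewrite big1 // => b _; rewrite mul0r.
Qed.

Lemma normal_form0 : normal_form Z.
Proof. by exists Z, (fun=> 0), 0; rewrite TQsum0 sadd0r; split; first exact: span0. Qed.

Lemma normal_formD f g : normal_form f -> normal_form g -> normal_form (sadd f g).
Proof.
move=> [u1 [beta1 [gamma1 [hu1 ->]]]] [u2 [beta2 [gamma2 [hu2 ->]]]].
exists (sadd u1 u2), (fun b => beta1 b + beta2 b), (gamma1 + gamma2).
split; first exact: spanD.
rewrite -TQsumD; apply: functional_extensionality => w; rewrite /sadd; ring.
Qed.

Lemma normal_formZ c f : normal_form f -> normal_form (sscale c f).
Proof.
move=> [u [beta [gamma [hu ->]]]]; exists (sscale c u), (fun b => c * beta b), (c * gamma).
split; first exact: spanZ.
by rewrite -TQsumZ; apply: functional_extensionality => w; rewrite /sadd /sscale mulrDr.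
Qed.

Lemma normal_formT b : (0 < b < m)%N -> normal_form (T b).
Proof.
move=> hb; exists Z, (fun i => (i == b)%:R), 0; split; first exact: span0.
apply: functional_extensionality => w; rewrite sadd0l /TQsum /ssum /sadd /sscale mul0r addr0.
by rewrite (@sum_nat_kron _ _ _ _ b) // hb.
Qed.

Lemma normal_formQ : normal_form Q.
Proof.
exists Z, (fun=> 0), 1; split; first exact: span0.
apply: functional_extensionality => w; rewrite sadd0l /TQsum /ssum /sadd /sscale mul1r.
by rewrite big1 ?add0r // => b _; rewrite mul0r.
Qed.

Lemma normal_form_triple g : triple_xdeg m g -> normal_form g.
Proof.
move=> [a [b [c [habc ->]]]]; rewrite /Y3.
case: a habc => [|a]; case: b => [|b]; case: c => [|c] habc.
- by rewrite sbrss sbr0l; apply: normal_form0.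
- by rewrite sbrss sbr0l; apply: normal_form0.
- by rewrite (_ : b.+1 = m); [apply: normal_formQ | lia].
- rewrite [sbr (Y 0) _]sbr_skew sbrZl; apply: normal_formZ.
  by rewrite (_ : c.+1 = m - b.+1)%N; [apply: normal_formT | ]; lia.
- rewrite [sbr (Y a.+1) _]sbr_skew sbrZl; apply: normal_formZ.
  by rewrite (_ : a.+1 = m); [apply: normal_formQ | lia].
- by rewrite (_ : c.+1 = m - a.+1)%N; [apply: normal_formT | ]; lia.
- rewrite sbr_jacobi [sbr (Y a.+1) (sbr _ _)]sbr_skew; apply: normal_formD.
    by rewrite (_ : b.+1 = m - a.+1)%N; [apply: normal_formT | ]; lia.
  by apply: normal_formZ; rewrite (_ : a.+1 = m - b.+1)%N; [apply: normal_formT | ]; lia.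
- exists (Y3 a.+1 b.+1 c.+1), (fun=> 0), 0; rewrite TQsum0 sadd0r.
  by split=> //; apply: span_gen; exists a.+1, b.+1, c.+1.
Qed.

Lemma normal_form_in_L f : in_L f -> multihom f m 3 -> normal_form f.
Proof.
move=> f_in_L f_hom; elim: (span_bideg_in_L f_in_L f_hom).
- exact: normal_form0.
- exact: normal_form_triple.
- by move=> *; apply: normal_formD.
- by move=> *; apply: normal_formZ.
Qed.

(** * The kernel of delta on normal forms *)

Lemma sdelta_pos_triple u : span pos_triple u -> sdelta u = Z.
Proof.
apply: span_sdelta => _ [a [b [c [_ a_gt0 b_gt0 c_gt0 ->]]]].
by rewrite /Y3 !sdelta_sbr !sdelta_Y // sbr0l sbr0r sadd0r !sbr0l sbr0r sadd0r.
Qed.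

Definition Yprod (p : nat) : ser := smul (Y p) (Y (m.+1 - p)).

Lemma sbr_Y_Yprod a b : (a + b = m.+1)%N -> sbr (Y a) (Y b) = ssub (Yprod a) (Yprod b).
Proof.
move=> hab; rewrite /Yprod (_ : m.+1 - a = b)%N; last by lia.
by rewrite (_ : m.+1 - b = a)%N //; lia.
Qed.

Lemma sdelta_T b : (0 < b < m)%N -> sdelta (T b) = ssub (Yprod b.+1) (Yprod (m - b)).
Proof.
move=> hb; rewrite /T /Y3 sdelta_sbr (@sdelta_Y (m - b)); last by lia.
rewrite sbr0r sadd0r sdelta_sbr sdelta_Y0 (@sdelta_Y b); last by lia.
by rewrite sbr0l sadd0l -YS sbr_Y_Yprod //; lia.
Qed.

Lemma sdelta_Q : (0 < m)%N ->
  sdelta Q = sadd (sscale 2 (ssub (Yprod 0) (Yprod m.+1))) (ssub (Yprod 1) (Yprod m)).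
Proof.
move=> m_gt0; rewrite /Q /Y3 sdelta_sbr sdelta_Y0 sbr_jacobi -!YS.
rewrite sdelta_sbr sdelta_Y0 sdelta_Y // sbr0r sadd0r [sbr X _]sbr_skew -YS sbrZl.
rewrite [sbr (Y m.+1) _]sbr_skew !sbr_Y_Yprod; try lia.
by apply: functional_extensionality => w; rewrite /sadd /sscale /ssub; ring.
Qed.

Definition delta_coef (beta : nat -> K) (gamma : K) (p : nat) : K :=
  \sum_(1 <= b < m) ((p == b.+1)%:R - (p == (m - b)%N)%:R) * beta b
  + (((p == 0)%:R - (p == m.+1)%:R) *+ 2 + ((p == 1)%:R - (p == m)%:R)) * gamma.

Lemma sdelta_TQsum beta gamma w : (0 < m)%N ->
  sdelta (TQsum beta gamma) w = \sum_(0 <= p < m.+2) delta_coef beta gamma p * Yprod p w.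
Proof.
move=> m_gt0.
have sumY k : (k < m.+2)%N -> \sum_(0 <= p < m.+2) (p == k)%:R * Yprod p w = Yprod k w.
  by move=> hk; rewrite (@sum_nat_kron _ (pred1 k) 0 m.+2 k) //= hk.
have kron (k l : nat) (c : K) : (k < m.+2)%N -> (l < m.+2)%N ->
    \sum_(0 <= p < m.+2) ((p == k)%:R - (p == l)%:R) * c * Yprod p w =
    c * (Yprod k w - Yprod l w).
  move=> hk hl; rewrite -(sumY k hk) -(sumY l hl) -sumrB mulr_sumr.
  by apply: eq_bigr => p _; ring.
rewrite /delta_coef; under eq_bigr do rewrite mulrDl mulr_suml.
rewrite big_split /= exchange_big /= /TQsum sdeltaD sdelta_ssum sdeltaZ sdelta_Q //.
rewrite /ssum /sadd /sscale /ssub; congr (_ + _).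
  apply: eq_big_nat => b hb; rewrite sdeltaZ sdelta_T // /sscale /ssub.
  by symmetry; apply: kron; lia.
under eq_bigr do rewrite mulrDl mulrDl mulrnAl mulrnAl.
by rewrite big_split /= sumrMnl !kron //; ring.
Qed.

Lemma TQsum_kernel_coef beta gamma : (0 < m)%N -> sdelta (TQsum beta gamma) = Z ->
  forall p, (p <= m.+1)%N -> delta_coef beta gamma p = 0.
Proof. by move=> m_gt0 hd; apply: Yprod_free => w; rewrite -sdelta_TQsum // hd. Qed.

Lemma delta_coef0 beta gamma : (0 < m)%N -> delta_coef beta gamma 0 = gamma *+ 2.
Proof.
move=> m_gt0; rewrite /delta_coef big_nat big1 => [|b /andP [b_gt0 hb]]; last first.
  by rewrite (_ : (0 == m - b)%N = false) ?subrr ?mul0r //; apply/eqP; lia.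
by rewrite [0%N == m]eq_sym eqn0Ngt m_gt0 /= add0r !subr0 addr0 mulrnAl mul1r.
Qed.

Lemma delta_coef_lin beta p : (0 < p < m)%N ->
  delta_coef beta 0 p = (if (1 < p)%N then beta p.-1 else 0) - beta (m - p)%N.
Proof.
move=> hp; rewrite /delta_coef mulr0 addr0; under eq_bigr do rewrite mulrBl.
rewrite sumrB (@sum_nat_kron beta (fun b => p == b.+1) 1 m p.-1) => [|b hb]; last first.
  by apply/eqP/eqP; lia.
rewrite (@sum_nat_kron beta (fun b => p == (m - b)%N) 1 m (m - p)%N) => [|b hb]; last first.
  by apply/eqP/eqP; lia.
have -> : (1 <= p.-1 < m)%N = (1 < p)%N by apply/idP/idP; lia.
by rewrite [in X in _ - X]ifT //; lia.
Qed.

Lemma TQsum_kernel_Q beta gamma : (2 : K) != 0 -> sdelta (TQsum beta gamma) = Z ->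
  TQsum beta gamma = TQsum beta 0.
Proof.
move=> two_neq0 hd; have [m0 | m_gt0] := posnP m.
  apply: functional_extensionality => w.
  by rewrite /TQsum /sadd /sscale /Q m0 /Y3 sbrss sbr0l /szero !mulr0.
have := TQsum_kernel_coef m_gt0 hd (leq0n _); rewrite delta_coef0 // => /eqP.
by rewrite -mulr_natr mulf_eq0 (negbTE two_neq0) orbF => /eqP ->.
Qed.

Lemma TQsum_kernel_sym beta : sdelta (TQsum beta 0) = Z ->
  forall b, (0 < b < m)%N -> beta b = if (b < m.-1)%N then beta (m.-1 - b)%N else 0.
Proof.
move=> hd b hb; have m_gt0 : (0 < m)%N by lia.
have := TQsum_kernel_coef m_gt0 hd (leq_trans (leq_subr b m) (leqnSn m)).
rewrite delta_coef_lin; last by lia.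
rewrite (_ : m - (m - b) = b)%N; last by lia.
move=> /eqP; rewrite subr_eq0 => /eqP <-.
have -> : (1 < m - b)%N = (b < m.-1)%N by apply/idP/idP; lia.
by rewrite (_ : (m - b).-1 = m.-1 - b)%N //; lia.
Qed.

Lemma gen_elt_T k : (0 < k <= m)%N ->
  gen_elt K (m + 3) k = sscale (-1) (sadd (T (m - k)) (T k.-1)).
Proof.
move=> hk; rewrite /gen_elt /lbr !foldl_cat /=.
rewrite -/(Y k) -/(Y (m + 3 - 3 - k)) -/(Y (k - 1)) -/(Y (m + 3 - 2 - k)).
rewrite (_ : m + 3 - 3 - k = m - k)%N; last by lia.
rewrite (_ : k - 1 = k.-1)%N; last by lia.
rewrite (_ : m + 3 - 2 - k = m - k.-1)%N; last by lia.
rewrite /T /Y3 (_ : m - (m - k) = k)%N; last by lia.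
rewrite [sbr (Y k) _]sbr_skew.
by apply: functional_extensionality => w; rewrite /ssub /sscale /sadd; ring.
Qed.

Lemma T_pair_gen_elt b : (0 < b < m.-1)%N ->
  sadd (T b) (T (m.-1 - b)) = sscale (-1) (gen_elt K (m + 3) (maxn (m - b) b.+1)).
Proof.
move=> hb; rewrite gen_elt_T; last by rewrite geq_max; apply/andP; split; lia.
apply: functional_extensionality => w; rewrite /sadd /sscale /maxn.
case: ltnP => h.
  by rewrite (_ : m - b.+1 = m.-1 - b)%N //=; [ring | lia].
rewrite (_ : m - (m - b) = b)%N; last by lia.
by rewrite (_ : (m - b).-1 = m.-1 - b)%N; [ring | lia].
Qed.

Lemma gen_elt_cor_gens b : (0 < b < m.-1)%N ->
  cor_gens (m + 3) (gen_elt K (m + 3) (maxn (m - b) b.+1)).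
Proof. by move=> hb; right; right; exists (maxn (m - b) b.+1); split=> //; lia. Qed.

Lemma TQsum_sym_pairs beta : (2 : K) != 0 ->
  (forall b, (0 < b < m)%N -> beta b = if (b < m.-1)%N then beta (m.-1 - b)%N else 0) ->
  TQsum beta 0 =
  ssum (index_iota 1 m.-1) (fun b => sscale (beta b / 2) (sadd (T b) (T (m.-1 - b)))).
Proof.
move=> two_neq0 beta_sym; apply: functional_extensionality => w.
rewrite /TQsum /ssum /sadd /sscale mul0r addr0.
have [m_le1 | m_gt1] := leqP m 1.
  by rewrite !big_geq //; lia.
rewrite -{1}(prednK (ltnW m_gt1)) big_nat_recr /=; last by lia.
rewrite beta_sym ?ltnn ?mul0r ?addr0; last by lia.
under [in RHS]eq_bigr do rewrite mulrDr.
rewrite big_split /=.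
have -> : \sum_(1 <= b < m.-1) beta b / 2 * T (m.-1 - b) w =
          \sum_(1 <= b < m.-1) beta b / 2 * T b w.
  rewrite big_nat_rev /=; apply: eq_big_nat => b hb.
  rewrite (_ : 1 + m.-1 - b.+1 = m.-1 - b)%N; last by lia.
  rewrite (_ : m.-1 - (m.-1 - b) = b)%N; last by lia.
  rewrite [beta b]beta_sym; last by lia.
  by rewrite ifT //; lia.
rewrite -big_split /=; apply: eq_big_nat => b _.
by rewrite -mulrDl; congr (_ * _); field.
Qed.

Lemma TQsum_kernel_lie_gen beta gamma : (2 : K) != 0 -> sdelta (TQsum beta gamma) = Z ->
  lie_gen (cor_gens (m + 3)) (TQsum beta gamma).
Proof.
move=> two_neq0 hd; have Q_free := TQsum_kernel_Q two_neq0 hd.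
rewrite Q_free in hd *.
rewrite (TQsum_sym_pairs two_neq0 (TQsum_kernel_sym hd)).
apply: ssum_closed => [|f g|b]; last rewrite mem_index_iota => hb.
- by apply: (@lie_gen0 _ X); left.
- exact: lie_gen_add.
rewrite T_pair_gen_elt //; do 2 apply: lie_gen_scale.
exact/lie_gen_base/gen_elt_cor_gens.
Qed.

Lemma sdelta_gen_elt k : (1 < k < m)%N -> sdelta (gen_elt K (m + 3) k) = Z.
Proof.
move=> hk; rewrite gen_elt_T; last by lia.
rewrite sdeltaZ sdeltaD !sdelta_T; try lia.
rewrite (_ : m - (m - k) = k)%N; last by lia.
rewrite (_ : m - k.-1 = (m - k).+1)%N; last by lia.
rewrite prednK; last by lia.
by apply: functional_extensionality => w; rewrite /sscale /sadd /ssub /szero; ring.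
Qed.

Lemma cor_gens_sdelta g : cor_gens (m + 3) g -> sdelta g = Z.
Proof.
case=> [-> | [-> | [k [hk1 hk2 ->]]]]; first exact: sdelta_sx.
  by rewrite -[sbr _ _]/(Y 1) sdelta_Y.
by apply: sdelta_gen_elt; lia.
Qed.

Lemma pos_triple_lie_gen u : span pos_triple u -> lie_gen (cor_gens (m + 3)) u.
Proof.
have Y_gen a : (0 < a)%N -> lie_gen (cor_gens (m + 3)) (Y a).
  case: a => // a _; elim: a => [|a IH]; first by apply: lie_gen_base; right; left.
  by rewrite YS; apply: lie_gen_br IH _; apply: lie_gen_base; left.
apply: span_lie_gen; first by apply: (@lie_gen0 _ X); left.
move=> _ [a [b [c [_ a_gt0 b_gt0 c_gt0 ->]]]].
by apply: lie_gen_br; [apply: lie_gen_br|]; apply: Y_gen.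
Qed.

End NormalForm.
End FreeLieDerivation.

Theorem corollary5p6 (K : fieldType) (charK0 : [pchar K] =i pred0)
  (f : ser K) (n : nat) :
  in_L f -> (exists w, f w != 0) -> (3 <= n)%N -> multihom f (n - 3) 3 ->
  ((forall w, sdelta f w = 0) <-> lie_gen (cor_gens n) f).
Proof.
move=> f_in_L _ n_ge3.
have [m ->] : exists m, n = (m + 3)%N by exists (n - 3)%N; lia.
rewrite addnK => f_hom.
split=> [f_ker | f_gen]; last first.
  by move=> w; rewrite (lie_gen_sdelta (@cor_gens_sdelta K m) f_gen).
have two_neq0 : (2 : K) != 0 by rewrite (pcharf0P K).1.
have [u [beta [gamma [u_pos f_eq]]]] := normal_form_in_L f_in_L f_hom.
have TQ_ker : sdelta (TQsum m beta gamma) = szero K.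
  apply: functional_extensionality => w; move: (f_ker w).
  by rewrite f_eq sdeltaD (sdelta_pos_triple u_pos) sadd0l.
rewrite f_eq; apply: lie_gen_add; first exact: pos_triple_lie_gen.
exact: TQsum_kernel_lie_gen.
Qed.
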